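(* Consider the uplink of a cell-free massive MIMO system with $M$ access points (APs), each with $L$ antennas, and $K$ user equipments (UEs), each with $N$ antennas. For $m=1,\dots,M$ and $l=1,\dots,K$, let $\mathbf{H}_{ml}\in\mathbb{C}^{L\times N}$ be the random channel between AP $m$ and UE $l$, and for each $k$ let $\mathbf{V}_{mk}\in\mathbb{C}^{L\times N}$ be a random combining matrix used by AP $m$ for UE $k$ (all entries having finite second moments, so all expectations below exist). Let $\mathbf{F}_{l,\mathrm{u}}\in\mathbb{C}^{N\times N}$ be deterministic precoding matrices and $\bar{\mathbf{F}}_{l,\mathrm{u}}=\mathbf{F}_{l,\mathrm{u}}\mathbf{F}_{l,\mathrm{u}}^{H}$. Define $$\mathbf{G}_{kl}=\begin{bmatrix}\mathbf{V}_{1k}^{H}\mathbf{H}_{1l}\\ \vdots\\ \mathbf{V}_{Mk}^{H}\mathbf{H}_{Ml}\end{bmatrix}\in\mathbb{C}^{MN\times N},\qquad \mathbf{S}_k=\mathrm{diag}\big(\mathbb{E}\{\mathbf{V}_{1k}^{H}\mathbf{V}_{1k}\},\dots,\mathbb{E}\{\mathbf{V}_{Mk}^{H}\mathbf{V}_{Mk}\}\big)\in\mathbb{C}^{MN\times MN}$$ (block diagonal), let $\sigma^2>0$, and let $\tau_p<\tau_c$ be positive integers. For a LSFD coefficient matrix $\mathbf{A}_k\in\mathbb{C}^{MN\times N}$ set $$\mathbf{D}_k=\mathbf{A}_k^{H}\mathbb{E}\{\mathbf{G}_{kk}\}\mathbf{F}_{k,\mathrm{u}},\qquad \boldsymbol{\Sigma}_k=\sum_{l=1}^{K}\mathbf{A}_k^{H}\mathbb{E}\{\mathbf{G}_{kl}\bar{\mathbf{F}}_{l,\mathrm{u}}\mathbf{G}_{kl}^{H}\}\mathbf{A}_k-\mathbf{D}_k\mathbf{D}_k^{H}+\sigma^2\mathbf{A}_k^{H}\mathbf{S}_k\mathbf{A}_k,$$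 and $$\mathrm{SE}_k(\mathbf{A}_k)=\Big(1-\frac{\tau_p}{\tau_c}\Big)\log_2\big|\mathbf{I}_N+\mathbf{D}_k^{H}\boldsymbol{\Sigma}_k^{-1}\mathbf{D}_k\big|.$$ Then $\mathrm{SE}_k(\mathbf{A}_k)$ is maximized over $\mathbf{A}_k$ by $$\mathbf{A}_k^{\mathrm{opt}}=\Big(\sum_{l=1}^{K}\mathbb{E}\{\mathbf{G}_{kl}\bar{\mathbf{F}}_{l,\mathrm{u}}\mathbf{G}_{kl}^{H}\}+\sigma^2\mathbf{S}_k\Big)^{-1}\mathbb{E}\{\mathbf{G}_{kk}\}\mathbf{F}_{k,\mathrm{u}},$$ and the maximum value equals $$\mathrm{SE}_k^{\mathrm{opt}}=\Big(1-\frac{\tau_p}{\tau_c}\Big)\log_2\Big|\mathbf{I}_N+\mathbf{F}_{k,\mathrm{u}}^{H}\mathbb{E}\{\mathbf{G}_{kk}\}^{H}\Big(\sum_{l=1}^{K}\mathbb{E}\{\mathbf{G}_{kl}\bar{\mathbf{F}}_{l,\mathrm{u}}\mathbf{G}_{kl}^{H}\}-\mathbb{E}\{\mathbf{G}_{kk}\}\bar{\mathbf{F}}_{k,\mathrm{u}}\mathbb{E}\{\mathbf{G}_{kk}\}^{H}+\sigma^2\mathbf{S}_k\Big)^{-1}\mathbb{E}\{\mathbf{G}_{kk}\}\mathbf{F}_{k,\mathrm{u}}\Big|.$$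
   Context: $|\cdot|$ denotes the determinant, $(\cdot)^H$ the conjugate transpose, and $\mathbb{E}\{\cdot\}$ expectation over the random channels and combining matrices. $\mathbf{A}_k$ ranges over matrices for which $\boldsymbol{\Sigma}_k$ is invertible; the matrices $\sum_{l}\mathbb{E}\{\mathbf{G}_{kl}\bar{\mathbf{F}}_{l,\mathrm{u}}\mathbf{G}_{kl}^{H}\}+\sigma^2\mathbf{S}_k$ and $\sum_{l}\mathbb{E}\{\mathbf{G}_{kl}\bar{\mathbf{F}}_{l,\mathrm{u}}\mathbf{G}_{kl}^{H}\}-\mathbb{E}\{\mathbf{G}_{kk}\}\bar{\mathbf{F}}_{k,\mathrm{u}}\mathbb{E}\{\mathbf{G}_{kk}\}^{H}+\sigma^2\mathbf{S}_k$ are (as implicit in the formulas) assumed invertible. *)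

From HB Require Import structures.
From mathcomp Require Import all_boot all_order all_algebra.
From mathcomp Require Import all_classical all_reals all_analysis.
From mathcomp Require Import complex.

Set Implicit Arguments.
Unset Strict Implicit.
Unset Printing Implicit Defensive.

Import Order.TTheory GRing.Theory Num.Theory.
Local Open Scope ring_scope.

Definition ctmx (R : realType) (m n : nat) (A : 'M[R[i]]_(m, n)) : 'M[R[i]]_(n, m) :=
  (map_mx Num.conj A)^T.

Section Expect.
Context {d : measure_display} {Omega : measurableType d} {R : realType}
        (P : probability Omega R).

Definition sq_integrable (f : Omega -> R) : Prop :=
  measurable_fun setT f /\ P.-integrable setT (fun w => ((f w) ^+ 2)%:E).

Definition csq_integrable (X : Omega -> R[i]) : Prop :=
  sq_integrable (fun w => complex.Re (X w)) /\ sq_integrable (fun w => complex.Im (X w)).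

Definition mx_sq_integrable (m n : nat) (X : Omega -> 'M[R[i]]_(m, n)) : Prop :=
  forall i j, csq_integrable (fun w => X w i j).

Definition cexpect (X : Omega -> R[i]) : R[i] :=
  Complex (fine ('E_P[fun w => complex.Re (X w)])%E) (fine ('E_P[fun w => complex.Im (X w)])%E).

Definition mexpect (m n : nat) (X : Omega -> 'M[R[i]]_(m, n)) : 'M[R[i]]_(m, n) :=
  \matrix_(i, j) cexpect (fun w => X w i j).

End Expect.

Section CellFree.
Context {d : measure_display} {Omega : measurableType d} {R : realType}
        (P : probability Omega R) (M K L N : nat)
        (H : 'I_M -> 'I_K -> Omega -> 'M[R[i]]_(L, N))
        (V : 'I_M -> 'I_K -> Omega -> 'M[R[i]]_(L, N))
        (F : 'I_K -> 'M[R[i]]_N)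
        (sigma2 : R) (tau_p tau_c : nat).

Definition Fbar (l : 'I_K) : 'M[R[i]]_N := F l *m ctmx (F l).

Definition Gmx (k l : 'I_K) (w : Omega) : 'M[R[i]]_(\sum_(m < M) N, N) :=
  \mxcol_(m < M) (ctmx (V m k w) *m H m l w).

Definition Smx (k : 'I_K) : 'M[R[i]]_(\sum_(m < M) N) :=
  \mxdiag_(m < M) mexpect P (fun w => ctmx (V m k w) *m V m k w).

Definition EGFG (k l : 'I_K) : 'M[R[i]]_(\sum_(m < M) N) :=
  mexpect P (fun w => Gmx k l w *m Fbar l *m ctmx (Gmx k l w)).

Definition EG (k : 'I_K) : 'M[R[i]]_(\sum_(m < M) N, N) := mexpect P (Gmx k k).

Definition sigma2C : R[i] := Complex sigma2 0.

Definition Dmx (k : 'I_K) (A : 'M[R[i]]_(\sum_(m < M) N, N)) : 'M[R[i]]_N :=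
  ctmx A *m EG k *m F k.

Definition Sigmx (k : 'I_K) (A : 'M[R[i]]_(\sum_(m < M) N, N)) : 'M[R[i]]_N :=
  \sum_(l < K) (ctmx A *m EGFG k l *m A) - Dmx k A *m ctmx (Dmx k A)
  + sigma2C *: (ctmx A *m Smx k *m A).

Definition log2 (x : R) : R := ln x / ln 2.

Definition prelog : R := 1 - tau_p%:R / tau_c%:R.

(* SE_k(A_k); the determinant is that of a Hermitian positive definite matrix,
   hence real positive: we take its real part. *)
Definition SE (k : 'I_K) (A : 'M[R[i]]_(\sum_(m < M) N, N)) : R :=
  prelog * log2 (complex.Re (\det (1%:M + ctmx (Dmx k A) *m invmx (Sigmx k A) *m Dmx k A))).

Definition Aopt (k : 'I_K) : 'M[R[i]]_(\sum_(m < M) N, N) :=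
  invmx (\sum_(l < K) EGFG k l + sigma2C *: Smx k) *m EG k *m F k.

Definition SEopt (k : 'I_K) : R :=
  prelog * log2 (complex.Re (\det (1%:M + ctmx (F k) *m ctmx (EG k)
     *m invmx (\sum_(l < K) EGFG k l - EG k *m Fbar k *m ctmx (EG k) + sigma2C *: Smx k)
     *m EG k *m F k))).

End CellFree.

(* Write b := E{G_kk} F_k and Q := sum_l E{G_kl Fbar_l G_kl^H} - b b^H + sigma^2 S_k.
   Then D_k = A^H b and Sigma_k = A^H Q A, and Q is positive semidefinite:
   E{G_kk Fbar_k G_kk^H} - b b^H is a covariance matrix and the remaining terms
   are expectations of Gram matrices.  The SE thus only involves the generalized
   Rayleigh quotient b^H A (A^H Q A)^-1 A^H b, which lies below b^H Q^-1 b in the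
   Loewner order; the determinant is monotone on positive definite matrices
   (induction through Schur complements), and the bound is attained at
   A = (Q + b b^H)^-1 b = Q^-1 b (1 + b^H Q^-1 b)^-1. *)

From HB Require Import structures.
From mathcomp Require Import all_boot all_order all_algebra.
From mathcomp Require Import all_classical all_reals all_analysis.
From mathcomp Require Import complex lra measurable_realfun.

Set Implicit Arguments. Unset Strict Implicit. Unset Printing Implicit Defensive.
Import Order.TTheory GRing.Theory Num.Theory.
Local Open Scope ring_scope.
Local Open Scope sesquilinear_scope.

Section MatrixEntries.
Variable C : nzRingType.

Lemma addmxE m n (A B : 'M[C]_(m, n)) i j : (A + B) i j = A i j + B i j.
Proof. by rewrite mxE. Qed.

Lemma oppmxE m n (A : 'M[C]_(m, n)) i j : (- A) i j = - A i j.
Proof. by rewrite mxE. Qed.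

Lemma scalemxE m n a (A : 'M[C]_(m, n)) i j : (a *: A) i j = a * A i j.
Proof. by rewrite mxE. Qed.

End MatrixEntries.

Section ConjTranspose.
Variable C : numClosedFieldType.

Lemma trmxCE m n (A : 'M[C]_(m, n)) i j : A^t* i j = (A j i)^*.
Proof. by rewrite !mxE. Qed.

Lemma trmxC_mul m n p (A : 'M[C]_(m, n)) (B : 'M[C]_(n, p)) :
  (A *m B)^t* = B^t* *m A^t*.
Proof. by rewrite trmx_mul map_mxM. Qed.

Lemma trmxCD m n (A B : 'M[C]_(m, n)) : (A + B)^t* = A^t* + B^t*.
Proof. by apply/matrixP=> i j; rewrite !mxE rmorphD. Qed.

Lemma trmxCN m n (A : 'M[C]_(m, n)) : (- A)^t* = - A^t*.
Proof. by apply/matrixP=> i j; rewrite !mxE rmorphN. Qed.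

Lemma trmxCB m n (A B : 'M[C]_(m, n)) : (A - B)^t* = A^t* - B^t*.
Proof. by rewrite trmxCD trmxCN. Qed.

Lemma trmxC0 m n : (0 : 'M[C]_(m, n))^t* = 0.
Proof. by apply/matrixP=> i j; rewrite !mxE rmorph0. Qed.

Lemma trmxCZ m n a (A : 'M[C]_(m, n)) : (a *: A)^t* = a^* *: A^t*.
Proof. by apply/matrixP=> i j; rewrite !mxE rmorphM. Qed.

Lemma trmxC1 n : (1%:M : 'M[C]_n)^t* = 1%:M.
Proof. by rewrite trmx1 map_scalar_mx rmorph1. Qed.

Lemma trmxC_inv n (A : 'M[C]_n) : (invmx A)^t* = invmx (A^t*).
Proof. by rewrite trmx_inv map_invmx. Qed.

Lemma trmxC_col_mx m1 m2 n (A : 'M[C]_(m1, n)) (B : 'M[C]_(m2, n)) :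
  (col_mx A B)^t* = row_mx (A^t*) (B^t*).
Proof. by rewrite tr_col_mx map_row_mx. Qed.

Lemma trmxC_mxcol k (p_ : 'I_k -> nat) (X : forall i, 'M[C]_(p_ i, 1)) :
  (\mxcol_i X i)^t* = \mxrow_i (X i)^t*.
Proof. by apply/matrixP=> a b; rewrite !mxE. Qed.

End ConjTranspose.

Section PositiveSemidefinite.
Variable C : numClosedFieldType.

Definition qform n (M : 'M[C]_n) (x : 'cV[C]_n) : C := (x^t* *m M *m x) 0 0.
Definition psdmx n (M : 'M[C]_n) : Prop := forall x, 0 <= qform M x.
Definition pdmx n (M : 'M[C]_n) : Prop := forall x, x != 0 -> 0 < qform M x.

Lemma qformD n (M E : 'M[C]_n) x : qform (M + E) x = qform M x + qform E x.
Proof. by rewrite /qform mulmxDr mulmxDl addmxE. Qed.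

Lemma qformN n (M : 'M[C]_n) x : qform (- M) x = - qform M x.
Proof. by rewrite /qform mulmxN mulNmx oppmxE. Qed.

Lemma qformB n (M E : 'M[C]_n) x : qform (M - E) x = qform M x - qform E x.
Proof. by rewrite qformD qformN. Qed.

Lemma qformZ n a (M : 'M[C]_n) x : qform (a *: M) x = a * qform M x.
Proof. by rewrite /qform -scalemxAr -scalemxAl scalemxE. Qed.

Lemma qform_sum n I (r : seq I) (p : pred I) (M : I -> 'M[C]_n) x :
  qform (\sum_(i <- r | p i) M i) x = \sum_(i <- r | p i) qform (M i) x.
Proof. by rewrite /qform mulmx_sumr mulmx_suml summxE. Qed.

Lemma qform_trmxC n (M : 'M[C]_n) x : qform (M^t*) x = (qform M x)^*.
Proof. by rewrite /qform -trmxCE !trmxC_mul trmxCK mulmxA. Qed.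

Lemma qform_cong n p (Q : 'M[C]_n) (A : 'M[C]_(n, p)) x :
  qform (A^t* *m Q *m A) x = qform Q (A *m x).
Proof. by rewrite /qform trmxC_mul !mulmxA. Qed.

Lemma psdmx_cong n p (Q : 'M[C]_n) (A : 'M[C]_(n, p)) :
  psdmx Q -> psdmx (A^t* *m Q *m A).
Proof. by move=> psdQ x; rewrite qform_cong. Qed.

Lemma psdmxD n (M E : 'M[C]_n) : psdmx M -> psdmx E -> psdmx (M + E).
Proof. by move=> psdM psdE x; rewrite qformD addr_ge0. Qed.

Lemma psdmx_sum n I (r : seq I) (p : pred I) (M : I -> 'M[C]_n) :
  (forall i, p i -> psdmx (M i)) -> psdmx (\sum_(i <- r | p i) M i).
Proof. by move=> psdM x; rewrite qform_sum sumr_ge0 // => i /psdM. Qed.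

Lemma psdmxZ n a (M : 'M[C]_n) : 0 <= a -> psdmx M -> psdmx (a *: M).
Proof. by move=> a_ge0 psdM x; rewrite qformZ mulr_ge0. Qed.

Lemma pdmx_psd n (M : 'M[C]_n) : pdmx M -> psdmx M.
Proof.
move=> pdM x; have [->|x_neq0] := eqVneq x 0; last exact/ltW/pdM.
by rewrite /qform mulmx0 mxE.
Qed.

Lemma pdmxD n (M E : 'M[C]_n) : pdmx M -> psdmx E -> pdmx (M + E).
Proof.
by move=> pdM psdE x x_neq0; rewrite qformD (lt_le_trans (pdM x x_neq0)) ?lerDl.
Qed.

Lemma pdmx1 n : pdmx (1%:M : 'M[C]_n).
Proof.
have term_ge0 (x : 'cV[C]_n) i : 0 <= x^t* 0 i * x i 0.
  by rewrite trmxCE mulrC mul_conjC_ge0.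
move=> x x_neq0; rewrite /qform mulmx1 mxE lt_def sumr_ge0 ?andbT //.
apply: contra x_neq0 => /eqP /psumr_eq0P x0; apply/eqP/matrixP => i j.
rewrite ord1 mxE; apply/eqP; rewrite -mul_conjC_eq0 mulrC -trmxCE.
by rewrite x0.
Qed.

Lemma psdmx_mulmxtC m n (A : 'M[C]_(m, n)) : psdmx (A *m A^t*).
Proof.
have -> : A *m A^t* = (A^t*)^t* *m 1%:M *m A^t* by rewrite trmxCK mulmx1.
exact/psdmx_cong/pdmx_psd/pdmx1.
Qed.

(* Polarization, with the test vectors [x + y] and [x + 'i y]. *)
Lemma qform_eq0 n (M : 'M[C]_n) : (forall x, qform M x = 0) -> M = 0.
Proof.
move=> qM0; pose B (x y : 'cV[C]_n) := (x^t* *m M *m y) 0 0.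
have qformDB x y : qform M (x + y) = qform M x + qform M y + B x y + B y x.
  rewrite /qform /B trmxCD !mulmxDl !mulmxDr !addmxE.
  by rewrite -!addrA; congr (_ + _); rewrite [RHS]addrC addrA.
have B_skew x y : B x y + B y x = 0.
  by have := qformDB x y; rewrite !qM0 !add0r => ->.
have B_sym x y : B x y = B y x.
  have := B_skew x ('i *: y).
  rewrite /B trmxCZ -!scalemxAr -!scalemxAl !scalemxE conjCi mulNr.
  by move/eqP; rewrite subr_eq0 => /eqP /(mulfI (neq0Ci C)).
apply/matrixP=> i j; rewrite mxE.
have /eqP := B_skew (delta_mx j 0) (delta_mx i 0).
rewrite B_sym -mulr2n mulrn_eq0 /= /B => /eqP.
have -> : (delta_mx i (0 : 'I_1))^t* = delta_mx 0 i :> 'M[C]_(1, n).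
  by apply/matrixP=> a b; rewrite !mxE rmorph_nat andbC.
by rewrite -rowE -colE !mxE.
Qed.

(* Over [C], [0 <= z] forces [z] to be real; this fails for real matrices. *)
Lemma psdmx_herm n (M : 'M[C]_n) : psdmx M -> M^t* = M.
Proof.
move=> psdM; apply/eqP; rewrite -subr_eq0; apply/eqP/qform_eq0 => x.
by rewrite qformB qform_trmxC conj_Creal ?subrr // ger0_real.
Qed.

Lemma psdmx_inv n (M : 'M[C]_n) : psdmx M -> M \in unitmx -> psdmx (invmx M).
Proof.
move=> psdM uM x; rewrite -[x](mulKVmx uM) /qform trmxC_mul (psdmx_herm psdM).
by rewrite -!mulmxA mulKmx // mulmxA; apply: psdM.
Qed.

Lemma psdmx_mxdiag k (p_ : 'I_k -> nat) (B_ : forall i, 'M[C]_(p_ i)) :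
  (forall i, psdmx (B_ i)) -> psdmx (\mxdiag_i B_ i).
Proof.
move=> psdB x; rewrite -(submxcolK x) /qform trmxC_mxcol -mulmxA.
have -> : \mxdiag_i B_ i *m \mxcol_i submxcol x i = \mxcol_i (B_ i *m submxcol x i).
  rewrite /mxdiag mul_mxblock_mxrow; apply: eq_mxcol => i.
  rewrite (bigD1 i) //= eqxx conform_mx_id big1 ?addr0 // => j.
  by rewrite eq_sym => /negbTE ->; rewrite mul0mx.
rewrite mul_mxrow_mxcol summxE; apply: sumr_ge0 => i _.
by rewrite mulmxA; exact: psdB.
Qed.

End PositiveSemidefinite.

Section SchurComplement.
Variables (C : numClosedFieldType) (n : nat).
Implicit Types (M E : 'M[C]_(1 + n)) (x : 'cV[C]_n).

Definition pivot M : C := ulsubmx M 0 0.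

Definition schur_compl M : 'M[C]_n :=
  drsubmx M - (pivot M)^-1 *: (dlsubmx M *m ursubmx M).

Definition schur_lift M x : 'cV[C]_(1 + n) :=
  col_mx (- ((pivot M)^-1 *: (ursubmx M *m x))) x.

Lemma qform_pivot M : qform M (col_mx 1%:M 0) = pivot M.
Proof.
rewrite /qform trmxC_col_mx trmxC1 trmxC0 -{1}(submxK M) mul_row_block mul_row_col.
by rewrite !mul1mx !mul0mx !addr0 mulmx1 mulmx0 addr0.
Qed.

Lemma col_mx10_neq0 : col_mx (1%:M : 'M[C]_1) (0 : 'cV[C]_n) != 0.
Proof.
rewrite col_mx_eq0 eqxx andbT; apply/eqP => /matrixP /(_ 0 0).
by rewrite !mxE /= => /eqP; rewrite oner_eq0.
Qed.

Lemma pdmx_pivot_gt0 M : pdmx M -> 0 < pivot M.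
Proof. by move=> pdM; rewrite -qform_pivot pdM ?col_mx10_neq0. Qed.

Lemma mul_schur_lift M x :
  pivot M != 0 -> M *m schur_lift M x = col_mx 0 (schur_compl M *m x).
Proof.
move=> a_neq0; rewrite /schur_lift /schur_compl -{1}(submxK M) mul_block_col.
rewrite [ulsubmx M]mx11_scalar -/(pivot M) mul_scalar_mx scalerN scalerA.
rewrite mulfV // scale1r addNr; congr col_mx.
by rewrite mulmxN -scalemxAr mulmxBl -scalemxAl mulmxA addrC.
Qed.

Lemma qform_schur_lift M x :
  pivot M != 0 -> qform M (schur_lift M x) = qform (schur_compl M) x.
Proof.
move=> a_neq0; rewrite /qform -mulmxA mul_schur_lift //.
by rewrite /schur_lift trmxC_col_mx mul_row_col mulmx0 add0r mulmxA.
Qed.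

Lemma det_schur_compl M : pivot M != 0 -> \det M = pivot M * \det (schur_compl M).
Proof.
move=> a_neq0.
have pivotK : ulsubmx M *m ((pivot M)^-1 *: ursubmx M) = ursubmx M.
  rewrite {1}[ulsubmx M]mx11_scalar -/(pivot M) mul_scalar_mx scalerA.
  by rewrite mulfV // scale1r.
have LU : block_mx (ulsubmx M) 0 (dlsubmx M) (schur_compl M) *m
          block_mx 1%:M ((pivot M)^-1 *: ursubmx M) 0 1%:M = M.
  rewrite mulmx_block !mulmx1 !mul0mx !mulmx0 !addr0 pivotK.
  by rewrite /schur_compl -scalemxAr addrC subrK submxK.
by rewrite -{1}LU det_mulmx det_lblock det_ublock !det1 !mulr1 det_mx11.
Qed.

Lemma pdmx_schur_compl M : pdmx M -> pdmx (schur_compl M).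
Proof.
move=> pdM x x_neq0; have a_neq0 := lt0r_neq0 (pdmx_pivot_gt0 pdM).
rewrite -qform_schur_lift // pdM //.
by apply: contra x_neq0; rewrite col_mx_eq0 => /andP[_].
Qed.

Lemma qform_orthD m (M : 'M[C]_m) w y :
  M^t* = M -> w^t* *m (M *m y) = 0 -> qform M (w + y) = qform M w + qform M y.
Proof.
move=> hermM wMy0.
have yMw0 : y^t* *m M *m w = 0.
  have <- : (w^t* *m (M *m y))^t* = y^t* *m M *m w.
    by rewrite !trmxC_mul trmxCK hermM.
  by rewrite wMy0 trmxC0.
rewrite /qform trmxCD !mulmxDl !mulmxDr -[w^t* *m M *m y]mulmxA wMy0 yMw0.
by rewrite addr0 add0r addmxE.
Qed.

(* [qform (schur_compl M) x] is the minimum of [qform M] over the vectors with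
   lower block [x], attained at [schur_lift M x]; this minimum grows with [M]. *)
Lemma psdmx_schur_complD M E :
  pdmx M -> psdmx E -> psdmx (schur_compl (M + E) - schur_compl M).
Proof.
move=> pdM psdE x; have pdME := pdmxD pdM psdE.
have a_neq0 := lt0r_neq0 (pdmx_pivot_gt0 pdM).
have a'_neq0 := lt0r_neq0 (pdmx_pivot_gt0 pdME).
rewrite qformB subr_ge0 -!qform_schur_lift //.
have -> : schur_lift (M + E) x = col_mx (usubmx (schur_lift (M + E) x)
                                   - usubmx (schur_lift M x)) 0 + schur_lift M x.
  by rewrite {2 4}/schur_lift !col_mxKu add_col_mx subrK add0r.
rewrite qformD qform_orthD ?(psdmx_herm (pdmx_psd pdM)) //; last first.
  by rewrite mul_schur_lift // trmxC_col_mx trmxC0 mul_row_col mulmx0 mul0mx addr0.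
by rewrite addrAC lerDr addr_ge0 // (pdmx_psd pdM).
Qed.

End SchurComplement.

Lemma det_pd_mono (C : numClosedFieldType) n (M E : 'M[C]_n) :
  pdmx M -> psdmx E -> 0 < \det M <= \det (M + E).
Proof.
elim: n M E => [|n IH] M E pdM psdE; first by rewrite !det_mx00 ltr01 lexx.
have a_gt0 := pdmx_pivot_gt0 pdM.
have a'_gt0 := pdmx_pivot_gt0 (pdmxD pdM psdE).
have /andP[dS_gt0] := IH _ _ (pdmx_schur_compl pdM) (psdmx_schur_complD pdM psdE).
rewrite addrC subrK => dS_le.
rewrite !det_schur_compl ?lt0r_neq0 // mulr_gt0 //= ler_pM ?(ltW a_gt0) ?(ltW dS_gt0) //.
by rewrite -!qform_pivot qformD lerDl.
Qed.

Section GeneralizedRayleigh.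
Variables (C : numClosedFieldType) (n q : nat) (Q : 'M[C]_n) (b : 'M[C]_(n, q)).
Hypotheses (psdQ : psdmx Q) (uQ : Q \in unitmx).

Definition rayleigh p (A : 'M[C]_(n, p)) : 'M[C]_q :=
  (A^t* *m b)^t* *m invmx (A^t* *m Q *m A) *m (A^t* *m b).

Definition rayleigh_max : 'M[C]_q := b^t* *m invmx Q *m b.

(* With [Pi := A (A^H Q A)^-1 A^H] and [Z := b - Q Pi b], the gap is
   [Z^H Q^-1 Z], because [Pi Q Pi = Pi]. *)
Lemma psdmx_rayleigh_gap p (A : 'M[C]_(n, p)) :
  A^t* *m Q *m A \in unitmx -> psdmx (rayleigh_max - rayleigh A).
Proof.
move=> uS; have hermQ := psdmx_herm psdQ.
have hermS := psdmx_herm (psdmx_cong A psdQ).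
set S := A^t* *m Q *m A in uS hermS.
set Pi := A *m invmx S *m A^t*.
have hermPi : Pi^t* = Pi.
  have hermSi : (invmx S)^t* = invmx S by rewrite trmxC_inv hermS.
  by rewrite !trmxC_mul trmxCK hermSi mulmxA.
have PiQPi : Pi *m (Q *m Pi) = Pi.
  have -> : Pi *m (Q *m Pi) = A *m (invmx S *m S *m invmx S) *m A^t*.
    by rewrite /Pi /S !mulmxA.
  by rewrite mulVmx // mul1mx.
have -> : rayleigh A = b^t* *m Pi *m b by rewrite /rayleigh trmxC_mul trmxCK !mulmxA.
clearbody Pi; set Z := b - Q *m (Pi *m b).
have ZQi : Z^t* *m invmx Q = b^t* *m invmx Q - b^t* *m Pi.
  rewrite /Z trmxCB !trmxC_mul hermPi hermQ mulmxBl; congr (_ - _).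
  by rewrite -!mulmxA mulmxV // mulmx1.
have -> : rayleigh_max - b^t* *m Pi *m b = Z^t* *m invmx Q *m Z.
  rewrite /rayleigh_max ZQi /Z mulmxBr !mulmxBl -!mulmxA mulKmx //.
  by rewrite (mulmxA Q) (mulmxA Pi) PiQPi subrr subr0.
exact/psdmx_cong/psdmx_inv.
Qed.

Lemma det_rayleigh_le p (A : 'M[C]_(n, p)) :
  A^t* *m Q *m A \in unitmx ->
  0 < \det (1%:M + rayleigh A) <= \det (1%:M + rayleigh_max).
Proof.
move=> uS; have psd_rayleigh : psdmx (rayleigh A).
  by apply/psdmx_cong/psdmx_inv => //; apply: psdmx_cong.
have := det_pd_mono (pdmxD (@pdmx1 _ q) psd_rayleigh) (psdmx_rayleigh_gap uS).
by rewrite -addrA [rayleigh A + _]addrC subrK.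
Qed.

(* For [A = (Q + b b^H)^-1 b] one has [A = Q^-1 b J^-1] with [J := 1 + c] and
   [c := b^H Q^-1 b], hence [A^H b = J^-1 c] and [A^H Q A = J^-1 c J^-1]. *)
Lemma rayleigh_opt (A : 'M[C]_(n, q)) :
  Q + b *m b^t* \in unitmx -> (Q + b *m b^t*) *m A = b ->
  A^t* *m Q *m A \in unitmx -> rayleigh A = rayleigh_max.
Proof.
move=> uT TA uS; have hermQ := psdmx_herm psdQ.
have psdc : psdmx rayleigh_max by exact/psdmx_cong/psdmx_inv.
rewrite /rayleigh_max in psdc *; set c := b^t* *m invmx Q *m b in psdc *.
have hermc := psdmx_herm psdc.
have /andP[_ J_ge1] := det_pd_mono (@pdmx1 _ q) psdc; rewrite det1 in J_ge1.
have uJ : 1%:M + c \in unitmx.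
  by rewrite unitmxE unitfE lt0r_neq0 // (lt_le_trans ltr01).
have hermJi : (invmx (1%:M + c))^t* = invmx (1%:M + c).
  by rewrite trmxC_inv trmxCD trmxC1 hermc.
have hermQi : (invmx Q)^t* = invmx Q by rewrite trmxC_inv hermQ.
set J := 1%:M + c in uJ hermJi *.
have TAJ : (Q + b *m b^t*) *m (invmx Q *m b *m invmx J) = b.
  rewrite mulmxA mulmxDl mulKVmx // -mulmxA -{1}[b]mulmx1 -mulmxDr.
  by rewrite (mulmxA (b^t*)) -/c -/J -mulmxA mulmxV // mulmx1.
have {TAJ TA}Adef : A = invmx Q *m b *m invmx J.
  by apply: (can_inj (mulKmx uT)); rewrite TA TAJ.
subst A.
have AtHb : (invmx Q *m b *m invmx J)^t* *m b = invmx J *m c.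
  by rewrite !trmxC_mul hermJi hermQi !mulmxA.
have AtQA : (invmx Q *m b *m invmx J)^t* *m Q *m (invmx Q *m b *m invmx J)
            = invmx J *m c *m invmx J.
  rewrite !trmxC_mul hermJi hermQi !mulmxA -[_ *m invmx Q *m Q]mulmxA.
  by rewrite mulVmx // mulmx1.
rewrite /rayleigh AtHb AtQA trmxC_mul hermJi hermc.
rewrite AtQA in uS; set Sg := invmx J *m c *m invmx J in uS *.
have cE : c = J *m Sg *m J.
  by rewrite /Sg !mulmxA mulmxV // mul1mx -mulmxA mulVmx // mulmx1.
clearbody Sg J; rewrite [in LHS]cE -!mulmxA (mulKVmx uJ) (mulKmx uJ) (mulKVmx uS).
by rewrite mulmxA -cE.
Qed.

End GeneralizedRayleigh.

Section ComplexParts.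
Variable R : rcfType.
Implicit Types x y : R[i].
Local Notation Re := complex.Re.
Local Notation Im := complex.Im.

Lemma complexReD x y : Re (x + y) = Re x + Re y.
Proof. by case: x; case: y. Qed.

Lemma complexImD x y : Im (x + y) = Im x + Im y.
Proof. by case: x; case: y. Qed.

Lemma complexReM x y : Re (x * y) = Re x * Re y - Im x * Im y.
Proof. by case: x; case: y. Qed.

Lemma complexImM x y : Im (x * y) = Re x * Im y + Im x * Re y.
Proof. by case: x; case: y. Qed.

Lemma complexReJ x : Re x^* = Re x.
Proof. by case: x. Qed.

Lemma complexImJ x : Im x^* = - Im x.
Proof. by case: x. Qed.

End ComplexParts.

Section RealExpectation.
Context {d : measure_display} {Omega : measurableType d} {R : realType}
        (P : probability Omega R).
Implicit Types f g : Omega -> R.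

(* The product is dominated by [f^2 + g^2]. *)
Lemma sq_integrable_mul f g : sq_integrable P f -> sq_integrable P g ->
  (fun w => f w * g w) \in Lfun P 1.
Proof.
move=> [mf f2] [mg g2]; apply/Lfun1_integrable.
have f2g2 : P.-integrable setT (EFin \o (fun w => f w ^+ 2 + g w ^+ 2)).
  by apply: eq_integrable (integrableD measurableT f2 g2) => // w _.
apply: (le_integrable measurableT _ _ f2g2).
  by apply/measurable_EFinP; exact: measurable_funM.
move=> w _; rewrite /comp !abse_EFin lee_fin normrM.
rewrite [X in _ <= X]ger0_norm ?addr_ge0 ?sqr_ge0 //.
rewrite -[f w ^+ 2](real_normK (num_real _)) -[g w ^+ 2](real_normK (num_real _)).
have := normr_ge0 (f w); have := normr_ge0 (g w).
move: `|f w| `|g w| => a b ha hb; nra.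
Qed.

Lemma sq_integrable_Lfun1 f : sq_integrable P f -> f \in Lfun P 1.
Proof.
move=> sqf; have sq1 : sq_integrable P (fun _ => 1).
  by split; [exact: measurable_cst | exact: finite_measure_integrable_cst].
by have := sq_integrable_mul sqf sq1; under eq_fun do rewrite mulr1.
Qed.

Lemma sq_integrableN f : sq_integrable P f -> sq_integrable P (fun w => - f w).
Proof.
move=> [mf f2]; split; first exact: measurableT_comp.
by apply: eq_integrable f2 => // w _; rewrite /= sqrrN.
Qed.

Lemma fine_expectationD f g : f \in Lfun P 1 -> g \in Lfun P 1 ->
  fine 'E_P[fun w => f w + g w] = fine 'E_P[f] + fine 'E_P[g].
Proof. by move=> f1 g1; rewrite expectationD // fineD // expectation_fin_num. Qed.

Lemma fine_expectationZ k f : f \in Lfun P 1 ->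
  fine 'E_P[fun w => k * f w] = k * fine 'E_P[f].
Proof.
move=> f1; under eq_fun do rewrite mulrC.
by rewrite [X in fine X](expectationZl k f1) fineM // expectation_fin_num.
Qed.

Lemma fine_expectation_ge0 f : (forall w, 0 <= f w) -> 0 <= fine 'E_P[f].
Proof. by move=> f_ge0; apply/fine_ge0/expectation_ge0. Qed.

End RealExpectation.

Section ComplexExpectation.
Context {d : measure_display} {Omega : measurableType d} {R : realType}
        (P : probability Omega R).
Local Notation Re := complex.Re.
Local Notation Im := complex.Im.
Implicit Types X Y : Omega -> R[i].

Definition cintegrable X : Prop :=
  (fun w => Re (X w)) \in Lfun P 1 /\ (fun w => Im (X w)) \in Lfun P 1.

Lemma cintegrableD X Y : cintegrable X -> cintegrable Y ->
  cintegrable (fun w => X w + Y w).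
Proof.
move=> [Xr Xi] [Yr Yi]; split.
  by under eq_fun do rewrite complexReD; apply: rpredD.
by under eq_fun do rewrite complexImD; apply: rpredD.
Qed.

Lemma cintegrableZ a X : cintegrable X -> cintegrable (fun w => a * X w).
Proof.
move=> [Xr Xi]; split.
  by under eq_fun do rewrite complexReM; apply: rpredB; apply: rpredZ.
by under eq_fun do rewrite complexImM; apply: rpredD; apply: rpredZ.
Qed.

Lemma cintegrable_conj X : cintegrable X -> cintegrable (fun w => (X w)^*).
Proof.
move=> [Xr Xi]; split; first by under eq_fun do rewrite complexReJ.
by under eq_fun do rewrite complexImJ; rewrite rpredN.
Qed.

Lemma cintegrable_cst c : cintegrable (fun _ => c).
Proof. by split; apply: Lfun_cst. Qed.

Lemma cintegrable_sum I (r : seq I) (p : pred I) (X : I -> Omega -> R[i]) :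
  (forall i, cintegrable (X i)) -> cintegrable (fun w => \sum_(i <- r | p i) X i w).
Proof.
move=> iX; elim: r => [|i r IHr].
  by under eq_fun do rewrite big_nil; apply: cintegrable_cst.
case: (boolP (p i)) => pi.
  by under eq_fun do rewrite big_cons pi; apply: cintegrableD.
by under eq_fun do rewrite big_cons (negbTE pi).
Qed.

Lemma csq_integrable_mul X Y : csq_integrable P X -> csq_integrable P Y ->
  cintegrable (fun w => X w * Y w).
Proof.
move=> [Xr Xi] [Yr Yi]; split.
  by under eq_fun do rewrite complexReM; apply: rpredB; apply: sq_integrable_mul.
by under eq_fun do rewrite complexImM; apply: rpredD; apply: sq_integrable_mul.
Qed.

Lemma csq_integrable_cintegrable X : csq_integrable P X -> cintegrable X.
Proof. by move=> [Xr Xi]; split; apply: sq_integrable_Lfun1. Qed.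

Lemma csq_integrable_conj X : csq_integrable P X -> csq_integrable P (fun w => (X w)^*).
Proof.
move=> [Xr Xi]; split; first by under eq_fun do rewrite complexReJ.
by under eq_fun do rewrite complexImJ; apply: sq_integrableN.
Qed.

Lemma cexpectD X Y : cintegrable X -> cintegrable Y ->
  cexpect P (fun w => X w + Y w) = cexpect P X + cexpect P Y.
Proof.
move=> [Xr Xi] [Yr Yi]; rewrite /cexpect /=; congr Complex.
  by under eq_fun do rewrite complexReD; rewrite fine_expectationD.
by under eq_fun do rewrite complexImD; rewrite fine_expectationD.
Qed.

Lemma cexpectZ a X : cintegrable X -> cexpect P (fun w => a * X w) = a * cexpect P X.
Proof.
move=> [Xr Xi]; rewrite /cexpect; case: a => a1 a2 /=; congr Complex.
  under eq_fun do rewrite complexReM /= -mulNr.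
  by rewrite fine_expectationD ?fine_expectationZ ?rpredZ // mulNr.
under eq_fun do rewrite complexImM /= addrC.
by rewrite fine_expectationD ?fine_expectationZ ?rpredZ // addrC.
Qed.

Lemma cexpect_conj X : cintegrable X -> cexpect P (fun w => (X w)^*) = (cexpect P X)^*.
Proof.
move=> [Xr Xi]; rewrite /cexpect /=; congr Complex; first by under eq_fun do rewrite complexReJ.
under eq_fun do rewrite complexImJ -mulN1r.
by rewrite fine_expectationZ // mulN1r.
Qed.

Lemma cexpect_cst c : cexpect P (fun _ => c) = c.
Proof. by rewrite /cexpect !expectation_cst; case: c. Qed.

Lemma cexpect_sum I (r : seq I) (p : pred I) (X : I -> Omega -> R[i]) :
  (forall i, cintegrable (X i)) ->
  cexpect P (fun w => \sum_(i <- r | p i) X i w) = \sum_(i <- r | p i) cexpect P (X i).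
Proof.
move=> iX; elim: r => [|i r IHr].
  by under eq_fun do rewrite big_nil; rewrite cexpect_cst big_nil.
rewrite big_cons; case: (boolP (p i)) => pi; last first.
  by under eq_fun do rewrite big_cons (negbTE pi).
under eq_fun do rewrite big_cons pi.
by rewrite cexpectD ?IHr //; apply: cintegrable_sum.
Qed.

Lemma cexpect_ge0 X : (forall w, 0 <= X w) -> 0 <= cexpect P X.
Proof.
move=> X_ge0; rewrite /cexpect lecE /=.
under eq_fun do rewrite (ger0_Im (X_ge0 _)).
rewrite expectation_cst eqxx /=; apply: fine_expectation_ge0 => w.
by have := X_ge0 w; rewrite lecE => /andP[].
Qed.

End ComplexExpectation.

Section MatrixExpectation.
Context {d : measure_display} {Omega : measurableType d} {R : realType}
        (P : probability Omega R).
Local Notation C := R[i].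

Definition mx_integrable m n (Z : Omega -> 'M[C]_(m, n)) : Prop :=
  forall i j, cintegrable P (fun w => Z w i j).

Lemma mulmx3E p m n q (U : 'M[C]_(p, m)) (A : 'M[C]_(m, n)) (W : 'M[C]_(n, q)) i j :
  (U *m A *m W) i j = \sum_l \sum_k (U i k * W l j) * A k l.
Proof.
rewrite mxE; apply: eq_bigr => l _; rewrite mxE big_distrl /=.
by apply: eq_bigr => k _; rewrite mulrAC.
Qed.

Lemma mx_integrable_mulmx p m n q (U : 'M[C]_(p, m)) (W : 'M[C]_(n, q)) Z :
  mx_integrable Z -> mx_integrable (fun w => U *m Z w *m W).
Proof.
move=> iZ i j; under eq_fun do rewrite mulmx3E.
by do 2![apply: cintegrable_sum => ?]; apply: cintegrableZ.
Qed.

Lemma mx_integrable_trmxC m n (Z : Omega -> 'M[C]_(m, n)) :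
  mx_integrable Z -> mx_integrable (fun w => (Z w)^t*).
Proof. by move=> iZ i j; under eq_fun do rewrite trmxCE; apply: cintegrable_conj. Qed.

Lemma mx_integrableB m n (Z1 Z2 : Omega -> 'M[C]_(m, n)) :
  mx_integrable Z1 -> mx_integrable Z2 -> mx_integrable (fun w => Z1 w - Z2 w).
Proof.
move=> iZ1 iZ2 i j; under eq_fun do rewrite addmxE oppmxE -mulN1r.
by apply: cintegrableD => //; apply: cintegrableZ.
Qed.

Lemma mx_integrable_cst m n (A : 'M[C]_(m, n)) : mx_integrable (fun _ => A).
Proof. by move=> i j; apply: cintegrable_cst. Qed.

Lemma mx_sq_integrable_integrable m n (Z : Omega -> 'M[C]_(m, n)) :
  mx_sq_integrable P Z -> mx_integrable Z.
Proof. by move=> sqZ i j; apply: csq_integrable_cintegrable. Qed.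

Lemma mx_sq_integrable_trmxC m n (Z : Omega -> 'M[C]_(m, n)) :
  mx_sq_integrable P Z -> mx_sq_integrable P (fun w => (Z w)^t*).
Proof.
by move=> sqZ i j; under eq_fun do rewrite trmxCE; apply: csq_integrable_conj.
Qed.

Lemma mx_sq_integrable_mul m p q n (Z1 : Omega -> 'M[C]_(m, p)) (W : 'M[C]_(p, q))
    (Z2 : Omega -> 'M[C]_(q, n)) :
  mx_sq_integrable P Z1 -> mx_sq_integrable P Z2 ->
  mx_integrable (fun w => Z1 w *m W *m Z2 w).
Proof.
move=> sqZ1 sqZ2 i j; under eq_fun do rewrite mxE.
apply: cintegrable_sum => l; under eq_fun do rewrite mxE big_distrl.
apply: cintegrable_sum => k; under eq_fun do rewrite /= mulrAC mulrC.
by apply: cintegrableZ; apply: csq_integrable_mul.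
Qed.

Lemma mexpect_mulmx p m n q (U : 'M[C]_(p, m)) (W : 'M[C]_(n, q)) Z :
  mx_integrable Z -> mexpect P (fun w => U *m Z w *m W) = U *m mexpect P Z *m W.
Proof.
move=> iZ; apply/matrixP => i j; rewrite mulmx3E mxE.
under eq_fun do rewrite mulmx3E.
rewrite cexpect_sum => [|l]; last by apply: cintegrable_sum => k; apply: cintegrableZ.
apply: eq_bigr => l _; rewrite cexpect_sum => [|k]; last exact: cintegrableZ.
by apply: eq_bigr => k _; rewrite cexpectZ // mxE.
Qed.

Lemma mexpect_trmxC m n (Z : Omega -> 'M[C]_(m, n)) :
  mx_integrable Z -> mexpect P (fun w => (Z w)^t*) = (mexpect P Z)^t*.
Proof.
move=> iZ; apply/matrixP => i j; rewrite trmxCE !mxE -cexpect_conj //.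
by under eq_fun do rewrite trmxCE.
Qed.

Lemma mexpectB m n (Z1 Z2 : Omega -> 'M[C]_(m, n)) :
  mx_integrable Z1 -> mx_integrable Z2 ->
  mexpect P (fun w => Z1 w - Z2 w) = mexpect P Z1 - mexpect P Z2.
Proof.
move=> iZ1 iZ2; apply/matrixP => i j; rewrite !mxE.
under eq_fun do rewrite addmxE oppmxE -mulN1r.
by rewrite cexpectD ?cexpectZ ?mulN1r //; apply: cintegrableZ.
Qed.

Lemma mexpect_cst m n (A : 'M[C]_(m, n)) : mexpect P (fun _ => A) = A.
Proof. by apply/matrixP => i j; rewrite mxE cexpect_cst. Qed.

Lemma psdmx_mexpect n (Z : Omega -> 'M[C]_n) :
  mx_integrable Z -> (forall w, psdmx (Z w)) -> psdmx (mexpect P Z).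
Proof.
move=> iZ psdZ x; rewrite /qform -mexpect_mulmx // mxE.
by apply: cexpect_ge0 => w; apply: psdZ.
Qed.

(* [E{Z B Z^H} - E{Z} B E{Z}^H = E{(Z - E{Z}) B (Z - E{Z})^H}] for [B = W W^H]. *)
Lemma psdmx_mexpect_cov n p q (Z : Omega -> 'M[C]_(n, p)) (W : 'M[C]_(p, q)) :
  mx_sq_integrable P Z ->
  psdmx (mexpect P (fun w => Z w *m (W *m W^t*) *m (Z w)^t*)
         - mexpect P Z *m (W *m W^t*) *m (mexpect P Z)^t*).
Proof.
move=> sqZ; set m := mexpect P Z; set B := W *m W^t*.
have iZ := mx_sq_integrable_integrable sqZ.
have iZt := mx_integrable_trmxC iZ.
have iZBZt : mx_integrable (fun w => Z w *m B *m (Z w)^t*).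
  exact/mx_sq_integrable_mul/mx_sq_integrable_trmxC.
have iZBm : mx_integrable (fun w => 1%:M *m Z w *m (B *m m^t*)).
  exact: mx_integrable_mulmx.
have imBZt : mx_integrable (fun w => m *m B *m (Z w)^t* *m 1%:M).
  exact: mx_integrable_mulmx.
have centered w : ((Z w - m) *m W) *m ((Z w - m) *m W)^t*
    = Z w *m B *m (Z w)^t* - 1%:M *m Z w *m (B *m m^t*)
      - (m *m B *m (Z w)^t* *m 1%:M - m *m B *m m^t*).
  rewrite trmxC_mul -mulmxA (mulmxA W) -/B trmxCB mulmxBl !mulmxBr !mulmxA.
  by rewrite mul1mx mulmx1 opprB addrA.
have iL : mx_integrable (fun w => Z w *m B *m (Z w)^t* - 1%:M *m Z w *m (B *m m^t*)).
  exact: mx_integrableB.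
have iR : mx_integrable (fun w => m *m B *m (Z w)^t* *m 1%:M - m *m B *m m^t*).
  exact/mx_integrableB/mx_integrable_cst.
have mexpect_centered :
    mexpect P (fun w => ((Z w - m) *m W) *m ((Z w - m) *m W)^t*)
    = mexpect P (fun w => Z w *m B *m (Z w)^t*) - m *m B *m m^t*.
  under eq_fun do rewrite centered.
  rewrite (mexpectB iL iR) (mexpectB iZBZt iZBm) (mexpectB imBZt (mx_integrable_cst _)).
  rewrite mexpect_cst (mexpect_mulmx _ _ iZ) (mexpect_mulmx _ _ iZt) (mexpect_trmxC iZ).
  by rewrite mul1mx mulmx1 mulmxA subrr subr0.
rewrite -mexpect_centered; apply: psdmx_mexpect => [|w]; last exact: psdmx_mulmxtC.
by under eq_fun do rewrite centered; apply: mx_integrableB.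
Qed.


Lemma psdmx_mexpect_gram n p q (Z : Omega -> 'M[C]_(n, p)) (W : 'M[C]_(p, q)) :
  mx_sq_integrable P Z -> psdmx (mexpect P (fun w => Z w *m (W *m W^t*) *m (Z w)^t*)).
Proof.
move=> sqZ; set m := mexpect P Z.
rewrite -[X in psdmx X](subrK (m *m (W *m W^t*) *m m^t*)).
apply: psdmxD (psdmx_mexpect_cov W sqZ) _.
have -> : m *m (W *m W^t*) *m m^t* = (m^t*)^t* *m (W *m W^t*) *m m^t*.
  by rewrite trmxCK.
exact/psdmx_cong/psdmx_mulmxtC.
Qed.

End MatrixExpectation.

Lemma ctmxE (R : realType) m n (A : 'M[R[i]]_(m, n)) : ctmx A = A^t*.
Proof. by rewrite /ctmx map_trmx. Qed.

Lemma prelog_ge0 (R : realType) (tau_p tau_c : nat) :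
  (tau_p <= tau_c)%N -> 0 <= prelog (R:=R) tau_p tau_c.
Proof.
move=> le_pc; rewrite /prelog subr_ge0.
have [->|c_gt0] := posnP tau_c; first by rewrite invr0 mulr0.
by rewrite ler_pdivrMr ?ltr0n // mul1r ler_nat.
Qed.

Lemma ler_log2 (R : realType) (x y : R) : 0 < x -> x <= y -> log2 x <= log2 y.
Proof.
move=> x_gt0 le_xy; apply: ler_wpM2r; first by rewrite invr_ge0 ltW // ln_gt0 // ltr1n.
by rewrite ler_ln // posrE (lt_le_trans x_gt0 le_xy).
Qed.

Section CellFree.
Context {d : measure_display} {Omega : measurableType d} {R : realType}
  (P : probability Omega R) (M K L N : nat)
  (H V : 'I_M -> 'I_K -> Omega -> 'M[R[i]]_(L, N))
  (F : 'I_K -> 'M[R[i]]_N) (sigma2 : R) (k : 'I_K).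

Local Notation G := (Gmx H V k).

Definition mean_channel : 'M[R[i]]_(\sum_(m < M) N, N) := EG P H V k *m F k.

Definition interference_cov : 'M[R[i]]_(\sum_(m < M) N) :=
  \sum_(l < K) EGFG P H V F k l - EG P H V k *m Fbar F k *m ctmx (EG P H V k)
  + sigma2C sigma2 *: Smx P V k.

Local Notation b := mean_channel.
Local Notation Q := interference_cov.

Lemma EG_Fbar : EG P H V k *m Fbar F k *m ctmx (EG P H V k) = b *m b^t*.
Proof. by rewrite /Fbar !ctmxE trmxC_mul !mulmxA. Qed.

Lemma sum_EGFG_Smx :
  \sum_(l < K) EGFG P H V F k l + sigma2C sigma2 *: Smx P V k = Q + b *m b^t*.
Proof. by rewrite /interference_cov EG_Fbar addrAC subrK. Qed.

Lemma Sigmx_cong A : Sigmx P H V F sigma2 k A = A^t* *m Q *m A.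
Proof.
rewrite /Sigmx /interference_cov /Dmx EG_Fbar !ctmxE mulmxDr mulmxBr mulmxDl.
rewrite mulmxBl mulmx_sumr mulmx_suml -scalemxAr -scalemxAl /mean_channel.
by rewrite !trmxC_mul trmxCK !mulmxA.
Qed.

Lemma SE_rayleigh tau_p tau_c A :
  SE P H V F sigma2 tau_p tau_c k A
  = prelog tau_p tau_c * log2 (complex.Re (\det (1%:M + rayleigh Q b A))).
Proof. by rewrite /SE /rayleigh Sigmx_cong /Dmx !ctmxE /mean_channel (mulmxA (A^t*)). Qed.

Lemma SEopt_rayleigh tau_p tau_c :
  SEopt P H V F sigma2 tau_p tau_c k
  = prelog tau_p tau_c * log2 (complex.Re (\det (1%:M + rayleigh_max Q b))).
Proof.
by rewrite /SEopt /rayleigh_max -/interference_cov !ctmxE /mean_channel trmxC_mul !mulmxA.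
Qed.

Lemma Aopt_solves :
  Q + b *m b^t* \in unitmx -> (Q + b *m b^t*) *m Aopt P H V F sigma2 k = b.
Proof. by move=> uT; rewrite /Aopt sum_EGFG_Smx -mulmxA mulKVmx. Qed.

Hypotheses (sigma2_gt0 : 0 < sigma2)
           (sqV : forall m l, mx_sq_integrable P (V m l))
           (sqG : forall l, mx_sq_integrable P (G l)).

Lemma EGFGE l :
  EGFG P H V F k l = mexpect P (fun w => G l w *m (F l *m (F l)^t*) *m (G l w)^t*).
Proof. by congr (mexpect P _); apply/funext => w; rewrite /Fbar !ctmxE. Qed.

Lemma psdmx_EGFG l : psdmx (EGFG P H V F k l).
Proof. by rewrite EGFGE; apply: psdmx_mexpect_gram. Qed.

Lemma psdmx_Smx : psdmx (Smx P V k).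
Proof.
apply: psdmx_mxdiag => m.
have -> : mexpect P (fun w => ctmx (V m k w) *m V m k w)
          = mexpect P (fun w => (V m k w)^t* *m (1%:M *m 1%:M^t*) *m ((V m k w)^t*)^t*).
  by congr (mexpect P _); apply/funext => w; rewrite ctmxE trmxC1 !mulmx1 trmxCK.
exact/psdmx_mexpect_gram/mx_sq_integrable_trmxC.
Qed.

Lemma psdmx_interference_cov : psdmx Q.
Proof.
rewrite /interference_cov (bigD1 k) //= [_ - _ *m _ *m _]addrAC.
apply: psdmxD; first apply: psdmxD.
- by rewrite EGFGE /Fbar !ctmxE; apply: psdmx_mexpect_cov.
- by apply: psdmx_sum => l _; apply: psdmx_EGFG.
- by apply: psdmxZ psdmx_Smx; rewrite lecE /= eqxx ltW.
Qed.

End CellFree.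

Theorem corollary2 (d : measure_display) (Omega : measurableType d) (R : realType)
  (P : probability Omega R) (M K L N : nat)
  (H : 'I_M -> 'I_K -> Omega -> 'M[R[i]]_(L, N))
  (V : 'I_M -> 'I_K -> Omega -> 'M[R[i]]_(L, N))
  (F : 'I_K -> 'M[R[i]]_N) (sigma2 : R) (tau_p tau_c : nat) (k : 'I_K) :
  0 < sigma2 ->
  (0 < tau_p)%N -> (tau_p < tau_c)%N ->
  (forall (m : 'I_M) (l : 'I_K), mx_sq_integrable P (H m l)) ->
  (forall (m : 'I_M) (l : 'I_K), mx_sq_integrable P (V m l)) ->
  (forall l : 'I_K, mx_sq_integrable P (Gmx H V k l)) ->
  (\sum_(l < K) EGFG P H V F k l + sigma2C sigma2 *: Smx P V k) \in unitmx ->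
  (\sum_(l < K) EGFG P H V F k l - EG P H V k *m Fbar F k *m ctmx (EG P H V k)
     + sigma2C sigma2 *: Smx P V k) \in unitmx ->
  Sigmx P H V F sigma2 k (Aopt P H V F sigma2 k) \in unitmx ->
  (forall A : 'M[R[i]]_(\sum_(m < M) N, N),
      Sigmx P H V F sigma2 k A \in unitmx ->
      SE P H V F sigma2 tau_p tau_c k A
        <= SE P H V F sigma2 tau_p tau_c k (Aopt P H V F sigma2 k)) /\
  SE P H V F sigma2 tau_p tau_c k (Aopt P H V F sigma2 k)
    = SEopt P H V F sigma2 tau_p tau_c k.
Proof.
move=> sigma2_gt0 _ lt_pc _ sqV sqG uT uQ uS.
have psdQ : psdmx (interference_cov P H V F sigma2 k).
  exact: psdmx_interference_cov.
rewrite sum_EGFG_Smx in uT; rewrite Sigmx_cong in uS.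
have SE_Aopt : SE P H V F sigma2 tau_p tau_c k (Aopt P H V F sigma2 k)
               = SEopt P H V F sigma2 tau_p tau_c k.
  by rewrite SE_rayleigh SEopt_rayleigh (rayleigh_opt psdQ uQ uT (Aopt_solves uT) uS).
split; last exact: SE_Aopt.
move=> A; rewrite Sigmx_cong SE_Aopt SE_rayleigh SEopt_rayleigh => uA.
apply: ler_wpM2l; first exact/prelog_ge0/ltnW.
have /andP[] := det_rayleigh_le (mean_channel P H V F k) psdQ uQ uA.
by rewrite ltcE lecE => /andP[_ det_gt0] /andP[_ det_le]; apply: ler_log2.
Qed.
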